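(* Let $d \geq 1$, let $n_1,\dots,n_d \geq 1$, and let $G_{\mathrm{base}}$ be the unweighted $d$-dimensional grid graph with vertex set $[n_1]\times\cdots\times[n_d]$ (so $L = n_1 \cdots n_d$ vertices), where two vertices are adjacent iff they differ by exactly $1$ in exactly one coordinate. Let $f:\mathbb{N} \to \mathbb{R}$ be arbitrary and define the mask $\mathbf{M}$ indexed by the vertices by $\mathbf{M}_{u,v} = f(\mathrm{dist}_{G_{\mathrm{base}}}(u,v))$, where $\mathrm{dist}_{G_{\mathrm{base}}}$ is the shortest-path distance. Then there exists an ordering of the vertices such that $\mathbf{M}$, written as an $L\times L$ matrix in this ordering, is a $d$-level block-Toeplitz matrix.
   Context: A matrix $\mathbf{M} \in \mathbb{R}^{L\times L}$ is Toeplitz (equivalently, $1$-level block-Toeplitz) if there is $\xi:\mathbb{Z}\to\mathbb{R}$ with $\mathbf{M}_{i,j} = \xi(i-j)$ for all $i,j$. For $d \geq 2$, $\mathbf{M}$ is $d$-level block-Toeplitz if $\mathbf{M} = (\mathbf{B}^{i,j})_{i,j}$ is partitioned into blocks $\mathbf{B}^{i,j}$, each taken from some finite set $\{\mathbf{A}_1,\dots,\mathbf{A}_r\}$ of $(d-1)$-level block-Toeplitz matrices, such that replacing each block $\mathbf{B}^{i,j}$ by the index $k$ of its matrix $\mathbf{A}_k$ yields a Toeplitz matrix. *)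

From HB Require Import structures.
From mathcomp Require Import all_boot all_order all_algebra.
From mathcomp Require Import reals.
Set Implicit Arguments. Unset Strict Implicit. Unset Printing Implicit Defensive.
Import Order.TTheory GRing.Theory Num.Theory.
Local Open Scope ring_scope.

(* Matrices of size L x L are represented as functions nat -> nat -> R,
   only the entries with indices < L being relevant. Indices start at 0. *)

Definition toeplitz (R : Type) (L : nat) (M : nat -> nat -> R) : Prop :=
  exists xi : int -> R, forall i j : nat, (i < L)%N -> (j < L)%N ->
    M i j = xi (i%:Z - j%:Z).

(* For d >= 2: M is partitioned into m x m blocks of size k x k (L = m * k),
   each block being one of finitely many matrices A_0, ..., A_{r-1}, all
   (d-1)-level block-Toeplitz, and the index matrix (idx i j) is Toeplitz.
   Level 0 is meaningless and set to False. *)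
Fixpoint block_toeplitz (R : Type) (d : nat) (L : nat) (M : nat -> nat -> R)
  {struct d} : Prop :=
  match d with
  | 0 => False
  | d'.+1 =>
    match d' with
    | 0 => toeplitz L M
    | _ =>
      exists (m k r : nat) (A : nat -> nat -> nat -> R) (idx : nat -> nat -> nat),
        [/\ L = (m * k)%N,
            (forall t, (t < r)%N -> block_toeplitz d' k (A t)),
            (forall i j, (i < m)%N -> (j < m)%N -> (idx i j < r)%N),
            toeplitz m idx &
            (forall i j, (i < L)%N -> (j < L)%N ->
               M i j = A (idx (i %/ k) (j %/ k))%N (i %% k)%N (j %% k)%N)]
    end
  end.

(* Grid graph on [n_1] x ... x [n_d], coordinates taken 0-based: v i < n i. *)
Definition vertex (d : nat) := {ffun 'I_d -> nat}.

Definition in_grid (d : nat) (n : 'I_d -> nat) (v : vertex d) : bool :=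
  [forall i, (v i < n i)%N].

Definition grid_adj (d : nat) (n : 'I_d -> nat) (u v : vertex d) : bool :=
  [&& in_grid n u, in_grid n v &
   [exists i, ((u i == (v i).+1) || (v i == (u i).+1)) &&
              [forall j, (j != i) ==> (u j == v j)]]].

(* a walk from u to v in the grid graph, listed by the vertices after u;
   its length is size p *)
Definition grid_walk (d : nat) (n : 'I_d -> nat) (u : vertex d) (p : seq (vertex d))
  (v : vertex d) : bool :=
  in_grid n u && path (grid_adj n) u p && (last u p == v).

Definition grid_dist_is (d : nat) (n : 'I_d -> nat) (u v : vertex d) (k : nat) : Prop :=
  (exists p, grid_walk n u p v /\ size p = k) /\
  (forall p, grid_walk n u p v -> (k <= size p)%N).

(* The shortest-path distance of the grid is the l1 distance, so M_{u,v} depends only on the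
   coordinatewise differences u - v.  List the vertices in row-major order, i.e. vertex number a
   is the vector of mixed-radix digits of a.  A matrix whose (a, b) entry depends only on the
   digitwise difference of a and b is multilevel block-Toeplitz: cutting it along the leading
   digit, the block in position (x, y) depends only on x - y, and every block is again such a
   matrix for the remaining digits. *)
From mathcomp Require Import all_boot all_order all_algebra.
From mathcomp Require Import reals.
From mathcomp Require Import zify.
Set Implicit Arguments. Unset Strict Implicit. Unset Printing Implicit Defensive.

Lemma eq_block_toeplitz (R : Type) d L (M M' : nat -> nat -> R) :
  (forall a b, a < L -> b < L -> M a b = M' a b) ->
  block_toeplitz d L M -> block_toeplitz d L M'.
Proof.
case: d => [|[|d]] //= eqM.
- by case=> xi Mxi; exists xi => i j Hi Hj; rewrite -eqM ?Mxi.
- case=> m [k [r [A [idx [L_mk A_bt idx_lt idx_toep Midx]]]]].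
  by exists m, k, r, A, idx; split=> // i j Hi Hj; rewrite -eqM ?Midx.
Qed.

Section MixedRadix.

Implicit Types (ns xs : seq nat) (a : nat).

Fixpoint digits ns a : seq nat :=
  if ns is _ :: ns' then a %/ \prod_(y <- ns') y :: digits ns' (a %% \prod_(y <- ns') y)
  else [::].

Fixpoint undigits ns xs : nat :=
  match ns, xs with
  | _ :: ns', x :: xs' => x * \prod_(y <- ns') y + undigits ns' xs'
  | _, _ => 0
  end.

Lemma size_digits ns a : size (digits ns a) = size ns.
Proof. by elim: ns a => //= n0 ns IH a; rewrite IH. Qed.

Lemma prod_gt0_cons n0 ns a : a < \prod_(y <- n0 :: ns) y -> 0 < \prod_(y <- ns) y.
Proof. by rewrite big_cons lt0n; apply: contraTneq => ->; rewrite muln0. Qed.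

Lemma digits_bounded ns a : a < \prod_(y <- ns) y -> all2 ltn (digits ns a) ns.
Proof.
elim: ns a => //= n0 ns IH a a_lt; have k_gt0 := prod_gt0_cons a_lt.
rewrite big_cons in a_lt.
by rewrite ltn_divLR // a_lt IH // ltn_pmod.
Qed.

Lemma digitsK ns a : a < \prod_(y <- ns) y -> undigits ns (digits ns a) = a.
Proof.
elim: ns a => [|n0 ns IH] a a_lt /=; first by move: a_lt; rewrite big_nil; case: a.
by rewrite IH ?ltn_pmod ?(prod_gt0_cons a_lt) // -divn_eq.
Qed.

Lemma undigits_bounded ns xs : all2 ltn xs ns -> undigits ns xs < \prod_(y <- ns) y.
Proof.
elim: ns xs => [|n0 ns IH] [|x xs] //=; first by rewrite big_nil.
case/andP=> x_lt /IH; rewrite big_cons; nia.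
Qed.

Lemma undigitsK ns xs : all2 ltn xs ns -> digits ns (undigits ns xs) = xs.
Proof.
elim: ns xs => [|n0 ns IH] [|x xs] //= /andP[_ xs_bd].
have rest_lt := undigits_bounded xs_bd.
have k_gt0 : 0 < \prod_(y <- ns) y by case: (\prod_(y <- ns) y) rest_lt.
by rewrite divnMDl // divn_small // addn0 modnMDl modn_small // IH.
Qed.

Definition diffs xs ys : seq int := [seq (z.1%:Z - z.2%:Z)%R | z <- zip xs ys].

Lemma block_toeplitz_digit_diffs (R : Type) ns (h : seq int -> R) :
  ns != [::] ->
  block_toeplitz (size ns) (\prod_(y <- ns) y)
    (fun a b => h (diffs (digits ns a) (digits ns b))).
Proof.
elim: ns h => [//|n0 [|n1 ns] IH] h _.
  by exists (fun z => h [:: z]) => i j _ _ /=; rewrite big_nil !divn1.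
pose k := \prod_(y <- n1 :: ns) y.
(* Blocks are indexed by the difference x - y of leading digits, shifted by n0 into a nat. *)
exists n0, k, (n0 + n0),
  (fun t a b => h ((t%:Z - n0%:Z)%R :: diffs (digits (n1 :: ns) a) (digits (n1 :: ns) b))),
  (fun x y => n0 + x - y); split.
- by rewrite big_cons.
- by move=> t _; apply: (IH (fun zs => h ((t%:Z - n0%:Z)%R :: zs))).
- by move=> x y x_lt y_lt; lia.
- by exists (fun z => `|(z + n0%:Z)%R|) => x y x_lt y_lt; lia.
- move=> i j _ j_lt; have k_gt0 := prod_gt0_cons j_lt; rewrite big_cons in j_lt.
  have : j %/ k < n0 by rewrite ltn_divLR.
  by rewrite /= -/k; move: (i %/ k) (j %/ k) => x y y_lt; congr (h (_ :: _)) => /=; lia.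
Qed.

End MixedRadix.

Section GridDistance.

Variables (d : nat) (n : 'I_d -> nat).
Implicit Types (u v w : vertex d) (p : seq (vertex d)).

Definition grid_l1 u v : nat := \sum_(i < d) `|u i - v i|.

Lemma grid_l1xx v : grid_l1 v v = 0.
Proof. by apply: big1 => i _; lia. Qed.

Lemma grid_l1_agree_except u w v (i : 'I_d) :
  (forall j, j != i -> u j = w j) ->
  grid_l1 u v + `|w i - v i| = grid_l1 w v + `|u i - v i|.
Proof.
move=> uw; rewrite /grid_l1 (bigD1 i) //= [in RHS](bigD1 i) //=.
have -> : \sum_(j < d | j != i) `|u j - v j| = \sum_(j < d | j != i) `|w j - v j|.
  by apply: eq_bigr => j /uw ->.
by rewrite addnAC [RHS]addnAC (addnC `|u i - v i|).
Qed.

Lemma grid_l1_adj u w v : grid_adj n u w -> grid_l1 u v <= (grid_l1 w v).+1.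
Proof.
case/and3P=> _ _ /existsP[i /andP[uw_i /forallP uw]].
have := @grid_l1_agree_except u w v i (fun j ji => eqP (implyP (uw j) ji)).
by case/orP: uw_i => /eqP ->; lia.
Qed.

Lemma grid_walk_size u p v : grid_walk n u p v -> grid_l1 u v <= size p.
Proof.
elim: p u => [|w p IH] u; first by case/andP=> _ /eqP /= <-; rewrite grid_l1xx.
case/andP=> /andP[_ /= /andP[uw wp]] last_v; have /and3P[_ w_in _] := uw.
by apply: leq_trans (grid_l1_adj v uw) _; apply: IH; rewrite /grid_walk w_in wp.
Qed.

Lemma grid_step_toward u v : in_grid n u -> in_grid n v -> u != v ->
  exists2 w, grid_adj n u w & grid_l1 u v = (grid_l1 w v).+1.
Proof.
move=> u_in v_in neq_uv.
have [i uv_i] : exists i, u i != v i.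
  apply/existsP; rewrite -negb_forall; apply: contra neq_uv => /forallP eq_uv.
  by apply/eqP/ffunP => j; apply/eqP.
pose w : vertex d :=
  [ffun j => if j == i then if u i < v i then (u i).+1 else (u i).-1 else u j].
have uw j : j != i -> u j = w j by rewrite ffunE => /negbTE ->.
have w_i : w i = if u i < v i then (u i).+1 else (u i).-1 by rewrite ffunE eqxx.
have := grid_l1_agree_except v uw; rewrite w_i => l1_uw.
have [ui_lt vi_lt] := (forallP u_in i, forallP v_in i).
exists w; last by move: l1_uw; case: ifP => ?; lia.
rewrite /grid_adj u_in /=; apply/andP; split.
  apply/forallP => j; have [->|ji] := eqVneq j i; last by rewrite -uw ?(forallP u_in).
  by rewrite w_i; case: ifP => ?; lia.
apply/existsP; exists i; rewrite w_i; apply/andP; split.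
  by case: ifP => ?; apply/orP; [right | left]; apply/eqP; lia.
by apply/forallP => j; apply/implyP => /uw ->.
Qed.

Lemma grid_walk_l1 u v : in_grid n u -> in_grid n v ->
  exists2 p, grid_walk n u p v & size p = grid_l1 u v.
Proof.
move=> + v_in; move Ek : (grid_l1 u v) => k; elim: k u Ek => [|k IH] u Ek u_in.
  have [-> | neq_uv] := eqVneq u v; first by exists [::] => //; rewrite /grid_walk /= v_in eqxx.
  by have [w _] := grid_step_toward u_in v_in neq_uv; rewrite Ek.
have [eq_uv | neq_uv] := eqVneq u v; first by rewrite eq_uv grid_l1xx in Ek.
have [w uw] := grid_step_toward u_in v_in neq_uv; rewrite Ek => -[/esym/IH].
case/and3P: (uw) => _ w_in _ /(_ w_in)[p /andP[/andP[_ wp] last_v] <-].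
by exists (w :: p) => //; rewrite /grid_walk /= u_in uw wp.
Qed.

Lemma grid_dist_l1 u v : in_grid n u -> in_grid n v -> grid_dist_is n u v (grid_l1 u v).
Proof.
move=> u_in v_in; split=> [|p]; last exact: grid_walk_size.
by have [p ? ?] := grid_walk_l1 u_in v_in; exists p.
Qed.

End GridDistance.

Section RowMajorOrder.

Variables (d : nat) (n : 'I_d -> nat).

Definition vertex_of (s : seq nat) : vertex d := [ffun i : 'I_d => nth 0 s i].

Lemma codom_vertex_of s : size s = d -> codom (vertex_of s) = s.
Proof.
move=> size_s; rewrite codomE; apply: (@eq_from_nth _ 0); rewrite size_map size_enum_ord //.
by move=> k k_lt; rewrite (nth_map (Ordinal k_lt)) ?size_enum_ord // ffunE nth_enum_ord.
Qed.

Lemma vertex_of_codom (v : vertex d) : vertex_of (codom v) = v.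
Proof. by apply/ffunP => i; rewrite ffunE codomE (nth_map i) ?size_enum_ord // nth_ord_enum. Qed.

Lemma in_gridE (v : vertex d) : in_grid n v = all2 ltn (codom v) (codom n).
Proof.
rewrite all2E !size_codom eqxx !codomE zip_map all_map /=.
by apply/forallP/allP => [lt_vn i _ | lt_vn i]; apply: lt_vn; rewrite ?mem_enum.
Qed.

Lemma grid_l1_codom (u v : vertex d) :
  grid_l1 u v = \sum_(z <- diffs (codom u) (codom v)) `|z|.
Proof. by rewrite !codomE /diffs zip_map !big_map -enumT big_enum. Qed.

Lemma prod_codom : \prod_(x <- codom n) x = \prod_(i < d) n i.
Proof. by rewrite codomE big_map big_enum. Qed.

Definition grid_vertex (a : nat) : vertex d := vertex_of (digits (codom n) a).

Local Notation L := (\prod_(i < d) n i).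

Lemma codom_grid_vertex a : codom (grid_vertex a) = digits (codom n) a.
Proof. by rewrite codom_vertex_of // size_digits size_codom card_ord. Qed.

Lemma in_grid_vertex a : a < L -> in_grid n (grid_vertex a).
Proof. by rewrite -prod_codom in_gridE codom_grid_vertex; apply: digits_bounded. Qed.

Lemma grid_vertex_inj a b : a < L -> b < L -> grid_vertex a = grid_vertex b -> a = b.
Proof.
rewrite -prod_codom => a_lt b_lt /(congr1 (fun v : vertex d => codom v)).
by rewrite !codom_grid_vertex => eq_ab; rewrite -(digitsK a_lt) eq_ab digitsK.
Qed.

Lemma grid_vertex_onto v : in_grid n v -> exists2 a, a < L & grid_vertex a = v.
Proof.
rewrite in_gridE => v_bd; exists (undigits (codom n) (codom v)).
  by rewrite -prod_codom undigits_bounded.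
by rewrite /grid_vertex undigitsK // vertex_of_codom.
Qed.

End RowMajorOrder.

Theorem lemma3p3 (R : realType) (d : nat) (n : 'I_d -> nat)
  (f : nat -> R) (M : vertex d -> vertex d -> R) :
  (1 <= d)%N ->
  (forall i, (1 <= n i)%N) ->
  (forall u v k, in_grid n u -> in_grid n v -> grid_dist_is n u v k ->
     M u v = f k) ->
  exists ord : nat -> vertex d,
    [/\ (forall a, (a < \prod_(i < d) n i)%N -> in_grid n (ord a)),
        (forall a b, (a < \prod_(i < d) n i)%N -> (b < \prod_(i < d) n i)%N ->
           ord a = ord b -> a = b),
        (forall v, in_grid n v -> exists2 a, (a < \prod_(i < d) n i)%N & ord a = v) &
        block_toeplitz d (\prod_(i < d) n i) (fun a b => M (ord a) (ord b))].
Proof.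
(* The sides n i may be 0: the construction never uses their positivity. *)
move=> d_gt0 _ M_dist; exists (grid_vertex n); split.
- exact: in_grid_vertex.
- exact: grid_vertex_inj.
- exact: grid_vertex_onto.
have codom_n_neq0 : codom n != [::] by rewrite -size_eq0 size_codom card_ord -lt0n.
have := block_toeplitz_digit_diffs (fun zs => f (\sum_(z <- zs) `|z|)) codom_n_neq0.
rewrite size_codom card_ord prod_codom; apply: eq_block_toeplitz => a b a_lt b_lt.
have [a_in b_in] := (in_grid_vertex a_lt, in_grid_vertex b_lt).
by rewrite (M_dist _ _ _ a_in b_in (grid_dist_l1 a_in b_in)) grid_l1_codom !codom_grid_vertex.
Qed.
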